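(* Let $i\in\mathcal N$, let $\mathbf l_i$ be an $m$-cell configuration of $i$, let $\ell\in\mathcal N_i$ and let $\mathbf l_\ell$ be any $m$-cell configuration of $\ell$ consistent with $\mathbf l_i$. Let $t^*$ be the unique positive solution of $$e^{L_2t^*}-\Big(L_2+\frac{L_2^2}{L_1\sqrt{N_{\max}}}\Big)t^*-1=0,\qquad N_{\max}:=\max\{N_i:i\in\mathcal N\}.$$ Then for every $\kappa\in\bar{\mathcal N}_\ell^{m-1}$ (note $\bar{\mathcal N}_\ell^{m-1}\subset\bar{\mathcal N}_i^m$), $$|\chi_\kappa^{[i]}(t)-\chi_\kappa^{[\ell]}(t)|\le Mt\quad\text{for all }t\in[0,t^*],$$ where $\chi_\kappa^{[i]}$ and $\chi_\kappa^{[\ell]}$ are computed from $\mathbf l_i$ and $\mathbf l_\ell$ respectively.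
   Context: Graph notions: $\mathcal N=\{1,\dots,N\}$ is a finite set of agents, agent $i$ has neighbor set $\mathcal N_i\subset\mathcal N\setminus\{i\}$ of cardinality $N_i$; $\mathcal G=(\mathcal N,\mathcal E)$ with $(\ell,i)\in\mathcal E$ iff $\ell\in\mathcal N_i$; a path of length $m$ is a sequence $i_0\cdots i_m$ with $(i_{k-1},i_k)\in\mathcal E$. For $m\ge1$, $\mathcal N_i^m$ is the set of agents $j\ne i$ having a path of length $m$ to $i$ and no shorter path to $i$; $\mathcal N_i^0=\{i\}$; $\bar{\mathcal N}_i^m=\bigcup_{k=0}^m\mathcal N_i^k$, of cardinality $\bar N_i^m$. Dynamics: each agent has state $x_i\in\mathbb R^n$ and drift $f_i(x_i,\mathbf x_j)$, $\mathbf x_j=(x_{j_1},\dots,x_{j_{N_i}})$ listing the neighbors' states in a fixed order. There are constants $M,L_1,L_2>0$ with $|f_i(x_i,\mathbf x_j)|\le M$, $|f_i(x_i,\mathbf x_j)-f_i(x_i,\mathbf y_j)|\le L_1|\mathbf x_j-\mathbf y_j|$ and $|f_i(x_i,\mathbf x_j)-f_i(y_i,\mathbf x_j)|\le L_2|x_i-y_i|$ for all $x_i,y_i\in\mathbb R^n$, $\mathbf x_j,\mathbf y_j\in\mathbb R^{N_in}$, $i\in\mathcal N$. Cells and reference trajectories: a cell decomposition $\mathcal S=\{S_l\}_{l\in\mathcal I}$ of $\mathbb R^n$ ($\mathcal I$ finite or countable) is a family of uniformly bounded connected sets with pairwise disjoint interiors whose union is $\mathbb R^n$; a reference point $x_{l,G}\in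 S_l$ is fixed for each $l$. Fix the degree of decentralization $m\ge1$. An $m$-cell configuration of agent $i$ is a tuple $\mathbf l_i=(l_\kappa)_{\kappa\in\bar{\mathcal N}_i^m}\in\mathcal I^{\bar N_i^m}$. Given $\mathbf l_i$, define $\chi_\kappa^{[i]}:[0,\infty)\to\mathbb R^n$ for $\kappa\in\bar{\mathcal N}_i^m$ as follows. Case (i), $\mathcal N_i^{m+1}=\emptyset$: $\dot\chi_\kappa^{[i]}(t)=f_\kappa(\chi_\kappa^{[i]}(t),\boldsymbol\chi_{j(\kappa)}^{[i]}(t))$, $\chi_\kappa^{[i]}(0)=x_{l_\kappa,G}$, for all $\kappa\in\bar{\mathcal N}_i^m$, where $\boldsymbol\chi_{j(\kappa)}^{[i]}$ lists $\chi_\nu^{[i]}$, $\nu\in\mathcal N_\kappa$ (these $\nu$ lie in $\bar{\mathcal N}_i^m$). Case (ii), $\mathcal N_i^{m+1}\ne\emptyset$: the same ODE and initial conditions for $\kappa\in\bar{\mathcal N}_i^{m-1}$, while $\chi_\kappa^{[i]}(t):=x_{l_\kappa,G}$ for all $t\ge0$ and $\kappa\in\mathcal N_i^m$. For $\ell\in\mathcal N_i$, an $m$-cell configuration $\mathbf l_\ell=(\bar l_\kappa)_{\kappa\in\bar{\mathcal N}_\ell^m}$ of $\ell$ is consistent with $\mathbf l_i=(l_\kappa)_{\kappa\in\bar{\mathcal N}_i^m}$ if $l_\kappa=\bar l_\kappa$ for all $\kappa\in\bar{\mathcal N}_i^m\cap\bar{\mathcal N}_\ell^m$. *)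

From Stdlib Require Import Reals List Lia.
Open Scope R_scope.

(** Points of R^n are represented by [nat -> R]; only components [c < n] matter.
    [inRn n x] singles out the canonical representatives (zero beyond n). *)
Definition vec := nat -> R.

Fixpoint sumR (k : nat) (g : nat -> R) : R :=
  match k with O => 0 | S k' => sumR k' g + g k' end.

Definition vdist (n : nat) (x y : vec) : R := sqrt (sumR n (fun c => (x c - y c) ^ 2)).
Definition vnorm (n : nat) (x : vec) : R := vdist n x (fun _ => 0).

(** Euclidean distance in R^{k n} between stacked vectors (lists of k points). *)
Definition sdist (n : nat) (xs ys : list vec) : R :=
  sqrt (fold_right Rplus 0 (map (fun p => (vdist n (fst p) (snd p)) ^ 2) (combine xs ys))).

Definition inRn (n : nat) (x : vec) : Prop := forall c, (n <= c)%nat -> x c = 0.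

(** Agents are 0..N-1; [nbr i] is the neighbour set N_i listed in the fixed order. *)
Definition graph_ok (N : nat) (nbr : nat -> list nat) : Prop :=
  forall i, (i < N)%nat ->
    NoDup (nbr i) /\ ~ In i (nbr i) /\ (forall j, In j (nbr i) -> (j < N)%nat).

(** [walk nbr j i k]: there is a path j = i_0 ... i_k = i of length k,
    with (i_{r-1}, i_r) in E, i.e. i_{r-1} in N_{i_r}. *)
Fixpoint walk (nbr : nat -> list nat) (j i : nat) (k : nat) : Prop :=
  match k with
  | O => j = i
  | S k' => exists l, In l (nbr i) /\ walk nbr j l k'
  end.

Definition layer (nbr : nat -> list nat) (i k j : nat) : Prop :=
  walk nbr j i k /\ forall k', (k' < k)%nat -> ~ walk nbr j i k'.

Definition ball_layer (nbr : nat -> list nat) (i k j : nat) : Prop :=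
  exists k', (k' <= k)%nat /\ layer nbr i k' j.

Definition Nmax (N : nat) (nbr : nat -> list nat) : nat :=
  fold_right Nat.max 0%nat (map (fun i => length (nbr i)) (seq 0 N)).

Definition drift_ok (N n : nat) (nbr : nat -> list nat)
    (f : nat -> vec -> list vec -> vec) (M L1 L2 : R) : Prop :=
  forall i, (i < N)%nat ->
    (forall x xs, length xs = length (nbr i) -> vnorm n (f i x xs) <= M) /\
    (forall x xs ys, length xs = length (nbr i) -> length ys = length (nbr i) ->
       vdist n (f i x xs) (f i x ys) <= L1 * sdist n xs ys) /\
    (forall x y xs, length xs = length (nbr i) ->
       vdist n (f i x xs) (f i y xs) <= L2 * vdist n x y).

Definition open_Rn (n : nat) (U : vec -> Prop) : Prop :=
  forall x, inRn n x -> U x ->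
    exists r, 0 < r /\ forall y, inRn n y -> vdist n x y < r -> U y.

Definition interior_Rn (n : nat) (A : vec -> Prop) (x : vec) : Prop :=
  inRn n x /\ exists r, 0 < r /\ forall y, inRn n y -> vdist n x y < r -> A y.

Definition connected_Rn (n : nat) (A : vec -> Prop) : Prop :=
  forall U V, open_Rn n U -> open_Rn n V ->
    (forall x, A x -> U x \/ V x) -> (forall x, A x -> U x -> V x -> False) ->
    (forall x, A x -> U x) \/ (forall x, A x -> V x).

(** S : I -> set of R^n is a cell decomposition (I finite or countable),
    and xG l is a reference point in S l. *)
Definition cell_decomposition (n : nat) (I : Type) (S : I -> vec -> Prop) (xG : I -> vec) : Prop :=
  (exists enc : I -> nat, forall a b, enc a = enc b -> a = b) /\
  (forall l x, S l x -> inRn n x) /\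
  (exists B, forall l x y, S l x -> S l y -> vdist n x y <= B) /\
  (forall l, connected_Rn n (S l)) /\
  (forall l l' x, l <> l' -> interior_Rn n (S l) x -> interior_Rn n (S l') x -> False) /\
  (forall x, inRn n x -> exists l, S l x) /\
  (forall l, S l (xG l)).

Definition solves_ode (n : nat) (nbr : nat -> list nat) (f : nat -> vec -> list vec -> vec)
    (chi : nat -> R -> vec) (k : nat) : Prop :=
  (forall c, (c < n)%nat -> forall t, 0 < t ->
     derivable_pt_lim (fun s => chi k s c) t
       (f k (chi k t) (map (fun nu => chi nu t) (nbr k)) c)) /\
  (forall c, (c < n)%nat -> forall eps, 0 < eps ->
     exists delta, 0 < delta /\
       forall s, 0 <= s < delta -> Rabs (chi k s c - chi k 0 c) < eps).

Definition ref_traj (n : nat) (nbr : nat -> list nat) (f : nat -> vec -> list vec -> vec)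
    (I : Type) (xG : I -> vec) (m i : nat) (li : nat -> I) (chi : nat -> R -> vec) : Prop :=
  ((forall j, ~ layer nbr i (S m) j) ->
     forall k, ball_layer nbr i m k ->
       solves_ode n nbr f chi k /\ (forall c, (c < n)%nat -> chi k 0 c = xG (li k) c)) /\
  ((exists j, layer nbr i (S m) j) ->
     (forall k, ball_layer nbr i (m - 1) k ->
        solves_ode n nbr f chi k /\ (forall c, (c < n)%nat -> chi k 0 c = xG (li k) c)) /\
     (forall k, layer nbr i m k -> forall t, 0 <= t ->
        forall c, (c < n)%nat -> chi k t c = xG (li k) c)).

Definition consistent (I : Type) (nbr : nat -> list nat) (m i l : nat) (li ll : nat -> I) : Prop :=
  forall k, ball_layer nbr i m k -> ball_layer nbr l m k -> li k = ll k.

(** Let [e_k(t)] be the distance between the two reference trajectories of an agent [k]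
    seen by both [i] and [l].  Consistency makes them start from the same reference point and
    both move at speed at most [M], so [e_k(t) <= 2 M t].  Suppose [e <= lam M s] on [[0, T)]
    for all such agents.  If [k] is frozen at its reference point in either configuration then
    [e_k(s) <= M s]; otherwise its neighbours are shared as well, so
    [|e_k'| <= L2 e_k + L1 sqrt(Nmax) lam M s] and Gronwall gives
    [e_k(s) <= L1 sqrt(Nmax) lam M phi(s) / L2^2] with [phi(s) = exp(L2 s) - 1 - L2 s].
    Since [phi(s)/s] increases, this is at most [lam rho(T) M s] with
    [rho(T) = L1 sqrt(Nmax) phi(T) / (L2^2 T)], and [tstar] is exactly the time where
    [rho(tstar) = 1].  For [T < tstar] the factor [rho(T) < 1], so iterating lowers [lam] from 2
    to 1; one more step on [[0, tstar]] with [rho = 1] yields [e_k(t) <= M t]. *)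

From Stdlib Require Import Reals List Lra Lia Psatz Classical.
From Coquelicot Require Import Coquelicot.
Open Scope R_scope.

(** * Euclidean norms *)

Lemma sumR_ext k g h : (forall c, (c < k)%nat -> g c = h c) -> sumR k g = sumR k h.
Proof.
  induction k as [|k IH]; intros H; simpl; [reflexivity|].
  rewrite IH by (intros; apply H; lia). rewrite H by lia. reflexivity.
Qed.

Lemma sumR_le k g h : (forall c, (c < k)%nat -> g c <= h c) -> sumR k g <= sumR k h.
Proof.
  induction k as [|k IH]; intros H; simpl; [lra|].
  pose proof (H k ltac:(lia)); pose proof (IH ltac:(intros; apply H; lia)); lra.
Qed.

Lemma sumR_plus k g h : sumR k (fun c => g c + h c) = sumR k g + sumR k h.
Proof. induction k; simpl; lra. Qed.

Lemma sumR_minus k g h : sumR k (fun c => g c - h c) = sumR k g - sumR k h.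
Proof. induction k; simpl; lra. Qed.

Lemma sumR_scal k a g : sumR k (fun c => a * g c) = a * sumR k g.
Proof. induction k; simpl; [lra|]. rewrite IHk; lra. Qed.

Lemma sumR_const k a : sumR k (fun _ => a) = INR k * a.
Proof. induction k; simpl sumR; [simpl; lra|]. rewrite IHk, S_INR; lra. Qed.

Lemma sumR_sq_nonneg k u : 0 <= sumR k (fun c => u c ^ 2).
Proof.
  rewrite <- (Rmult_0_r (INR k)), <- sumR_const.
  apply sumR_le; intros; apply pow2_ge_0.
Qed.

Definition enorm (n : nat) (z : vec) : R := sqrt (sumR n (fun c => z c ^ 2)).

Lemma enorm_nonneg n z : 0 <= enorm n z.
Proof. apply sqrt_pos. Qed.

Lemma enorm_sq n z : enorm n z ^ 2 = sumR n (fun c => z c ^ 2).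
Proof. apply pow2_sqrt, sumR_sq_nonneg. Qed.

Lemma vnorm_enorm n z : vnorm n z = enorm n z.
Proof. unfold vnorm, vdist, enorm. f_equal. apply sumR_ext; intros; ring. Qed.

Lemma enorm_zero n z : (forall c, (c < n)%nat -> z c = 0) -> enorm n z = 0.
Proof.
  intros Hz. unfold enorm. rewrite (sumR_ext _ _ (fun _ => 0)).
  - rewrite sumR_const, Rmult_0_r. apply sqrt_0.
  - intros c Hc. rewrite Hz by exact Hc. ring.
Qed.

Lemma enorm_le_bound n z b : 0 <= b -> (forall c, (c < n)%nat -> Rabs (z c) <= b) ->
  enorm n z <= sqrt (INR n) * b.
Proof.
  intros Hb Hz. rewrite <- (sqrt_pow2 b Hb), <- sqrt_mult by (auto using pos_INR, pow2_ge_0).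
  apply sqrt_le_1_alt. rewrite <- sumR_const. apply sumR_le. intros c Hc.
  rewrite <- !Rsqr_pow2, Rsqr_abs. pose proof (Hz c Hc). pose proof (Rabs_pos (z c)).
  unfold Rsqr. nra.
Qed.

Lemma two_mul_le_of_sq_le A B P a b : 0 <= A -> 0 <= B -> P ^ 2 <= A * B ->
  2 * P * a * b <= A * b ^ 2 + B * a ^ 2.
Proof.
  intros HA HB HP.
  assert (Hsq : (2 * P * a * b) ^ 2 <= (A * b ^ 2 + B * a ^ 2) ^ 2).
  { assert (0 <= (A * b ^ 2 - B * a ^ 2) ^ 2) by apply pow2_ge_0.
    assert (4 * P ^ 2 * (a ^ 2 * b ^ 2) <= 4 * (A * B) * (a ^ 2 * b ^ 2))
      by (apply Rmult_le_compat_r; [nra|lra]).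
    nra. }
  assert (0 <= A * b ^ 2 + B * a ^ 2) by nra.
  nra.
Qed.

Lemma sumR_mul_sq_le k u v :
  sumR k (fun c => u c * v c) ^ 2 <= sumR k (fun c => u c ^ 2) * sumR k (fun c => v c ^ 2).
Proof.
  induction k as [|k IH]; cbn [sumR]; [lra|].
  pose proof (two_mul_le_of_sq_le _ _ _ (u k) (v k)
    (sumR_sq_nonneg k u) (sumR_sq_nonneg k v) IH).
  nra.
Qed.

Lemma sumR_mul_le k u v : sumR k (fun c => u c * v c) <= enorm k u * enorm k v.
Proof.
  assert (0 <= enorm k u * enorm k v) by (apply Rmult_le_pos; apply enorm_nonneg).
  apply Rsqr_incr_0_var; [|assumption]. rewrite !Rsqr_pow2, Rpow_mult_distr, !enorm_sq.
  apply sumR_mul_sq_le.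
Qed.

Lemma enorm_triangle k u v : enorm k (fun c => u c + v c) <= enorm k u + enorm k v.
Proof.
  pose proof (enorm_nonneg k u); pose proof (enorm_nonneg k v).
  apply Rsqr_incr_0_var; [|lra]. rewrite !Rsqr_pow2, enorm_sq.
  replace (sumR k (fun c => (u c + v c) ^ 2)) with
    (sumR k (fun c => u c ^ 2) + 2 * sumR k (fun c => u c * v c) + sumR k (fun c => v c ^ 2)).
  2:{ rewrite <- sumR_scal, <- !sumR_plus. apply sumR_ext; intros; ring. }
  pose proof (sumR_mul_le k u v). rewrite <- !enorm_sq. nra.
Qed.

Lemma vdist_nonneg n x y : 0 <= vdist n x y.
Proof. apply sqrt_pos. Qed.

Lemma vdist_sym n x y : vdist n x y = vdist n y x.
Proof. unfold vdist. f_equal. apply sumR_ext; intros; ring. Qed.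

Lemma vdist_triangle n x y z : vdist n x z <= vdist n x y + vdist n y z.
Proof.
  unfold vdist.
  rewrite (sumR_ext n (fun c => (x c - z c) ^ 2) (fun c => ((x c - y c) + (y c - z c)) ^ 2))
    by (intros; f_equal; ring).
  apply (enorm_triangle n (fun c => x c - y c) (fun c => y c - z c)).
Qed.

Lemma vdist_ext_r n x y y' : (forall c, (c < n)%nat -> y c = y' c) -> vdist n x y = vdist n x y'.
Proof. intros H. unfold vdist. f_equal. apply sumR_ext; intros c Hc. rewrite H; auto. Qed.

Lemma vdist_eq_0 n x y : (forall c, (c < n)%nat -> x c = y c) -> vdist n x y = 0.
Proof. intros H. apply enorm_zero. intros c Hc. rewrite H by exact Hc. ring. Qed.

Lemma vdist_zero_r n x y : (forall c, (c < n)%nat -> y c = 0) -> vdist n x y = enorm n x.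
Proof.
  intros H. unfold vdist, enorm. f_equal. apply sumR_ext; intros c Hc. rewrite H; auto; ring.
Qed.

Lemma sdist_map_le n (A B : nat -> vec) (L : list nat) b : 0 <= b ->
  (forall nu, In nu L -> vdist n (A nu) (B nu) <= b) ->
  sdist n (map A L) (map B L) <= sqrt (INR (length L)) * b.
Proof.
  intros Hb H. unfold sdist.
  rewrite <- (sqrt_pow2 b Hb), <- sqrt_mult by (auto using pos_INR, pow2_ge_0).
  apply sqrt_le_1_alt. induction L as [|nu L IH]; [simpl; lra|].
  cbn [map combine fold_right length fst snd]. rewrite S_INR.
  pose proof (H nu (or_introl eq_refl)). pose proof (vdist_nonneg n (A nu) (B nu)).
  assert (IH' := IH (fun mu Hmu => H mu (or_intror Hmu))). nra.
Qed.

(** * Walks and layers *)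

Lemma walk_trans nbr j a b p q : walk nbr j a p -> walk nbr a b q -> walk nbr j b (p + q).
Proof.
  revert b. induction q as [|q IH]; intros b Hja Hab; simpl in Hab.
  - subst. rewrite Nat.add_0_r. exact Hja.
  - destruct Hab as [c [Hc Hac]]. rewrite Nat.add_succ_r. exists c. auto.
Qed.

Lemma walk_nbr nbr mu nu : In mu (nbr nu) -> walk nbr mu nu 1.
Proof. intros H. exists mu. simpl. auto. Qed.

Lemma walk_lt N nbr j i k : graph_ok N nbr -> (i < N)%nat -> walk nbr j i k -> (j < N)%nat.
Proof.
  intros HG. revert i. induction k as [|k IH]; intros i Hi Hw; simpl in Hw.
  - subst; exact Hi.
  - destruct Hw as [c [Hc Hw]]. apply (IH c); [apply (HG i Hi)|]; assumption.
Qed.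

Lemma walk_min_layer nbr j i k : walk nbr j i k -> exists k', (k' <= k)%nat /\ layer nbr i k' j.
Proof.
  induction k as [k IH] using (well_founded_induction Wf_nat.lt_wf). intros Hw.
  destruct (classic (exists k', (k' < k)%nat /\ walk nbr j i k')) as [[k' [Hk' Hw']]|Hmin].
  - destruct (IH k' Hk' Hw') as [k'' [Hk'' Hl]]. exists k''; split; [lia|exact Hl].
  - exists k. split; [lia|]. split; [exact Hw|]. intros k' Hk' Hw'. apply Hmin; eauto.
Qed.

Lemma ball_layer_walk nbr i m j : ball_layer nbr i m j -> exists p, (p <= m)%nat /\ walk nbr j i p.
Proof. intros [k [Hk [Hw _]]]. eauto. Qed.

Lemma walk_ball_layer nbr i m j p : (p <= m)%nat -> walk nbr j i p -> ball_layer nbr i m j.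
Proof.
  intros Hp Hw. destruct (walk_min_layer _ _ _ _ Hw) as [k [Hk Hl]].
  exists k; split; [lia|exact Hl].
Qed.

Lemma ball_layer_lt N nbr i m j :
  graph_ok N nbr -> (i < N)%nat -> ball_layer nbr i m j -> (j < N)%nat.
Proof.
  intros HG Hi Hj. destruct (ball_layer_walk _ _ _ _ Hj) as [p [_ Hw]].
  exact (walk_lt _ _ _ _ _ HG Hi Hw).
Qed.

Lemma ball_layer_of_nbr nbr i l m k :
  In l (nbr i) -> ball_layer nbr l m k -> ball_layer nbr i (S m) k.
Proof.
  intros Hl Hk. destruct (ball_layer_walk _ _ _ _ Hk) as [p [Hp Hw]].
  apply (walk_ball_layer _ _ _ _ (p + 1)); [lia|].
  exact (walk_trans _ _ _ _ _ _ Hw (walk_nbr _ _ _ Hl)).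
Qed.

Lemma ball_layer_mono nbr i m m' j : (m <= m')%nat -> ball_layer nbr i m j -> ball_layer nbr i m' j.
Proof. intros Hm [k [Hk Hl]]. exists k; split; [lia|exact Hl]. Qed.

Lemma ref_traj_cases n nbr f I xG m i li chi :
  (1 <= m)%nat -> ref_traj n nbr f I xG m i li chi ->
  forall nu, ball_layer nbr i m nu ->
  (solves_ode n nbr f chi nu /\ (forall c, (c < n)%nat -> chi nu 0 c = xG (li nu) c) /\
     forall mu, In mu (nbr nu) -> ball_layer nbr i m mu) \/
  (forall t, 0 <= t -> forall c, (c < n)%nat -> chi nu t c = xG (li nu) c).
Proof.
  intros Hm [Hclosed Hopen] nu Hnu.
  destruct (classic (exists j, layer nbr i (S m) j)) as [Hex|Hno].
  - destruct (Hopen Hex) as [Hinner Hfrozen].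
    destruct Hnu as [k [Hk Hl]].
    destruct (Nat.eq_dec k m) as [->|Hne]; [right; exact (Hfrozen nu Hl)|].
    left. destruct (Hinner nu) as [Hode Hinit]; [exists k; split; [lia|exact Hl]|].
    split; [exact Hode|split; [exact Hinit|]].
    intros mu Hmu. apply (walk_ball_layer _ _ _ _ (1 + k)); [lia|].
    exact (walk_trans _ _ _ _ _ _ (walk_nbr _ _ _ Hmu) (proj1 Hl)).
  - left. destruct (Hclosed (fun j Hj => Hno (ex_intro _ j Hj)) nu Hnu) as [Hode Hinit].
    split; [exact Hode|split; [exact Hinit|]].
    intros mu Hmu. destruct (ball_layer_walk _ _ _ _ Hnu) as [p [Hp Hw]].
    destruct (walk_min_layer _ _ _ _ (walk_trans _ _ _ _ _ _ (walk_nbr _ _ _ Hmu) Hw))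
      as [k [Hk Hl]].
    exists k. split; [|exact Hl].
    destruct (Nat.eq_dec k (S m)) as [->|Hne]; [exfalso; eauto|lia].
Qed.

Lemma le_fold_max x l : In x l -> (x <= fold_right Nat.max 0 l)%nat.
Proof. induction l as [|y l IH]; simpl; [tauto|]. intros [->|H]; [|specialize (IH H)]; lia. Qed.

Lemma length_nbr_le_Nmax N nbr k : (k < N)%nat -> (length (nbr k) <= Nmax N nbr)%nat.
Proof.
  intros Hk. apply le_fold_max, in_map_iff. exists k. split; [reflexivity|]. apply in_seq. lia.
Qed.

(** * Differential inequalities *)

Definition has_derivs (n : nat) (X DX : R -> vec) : Prop :=
  forall c, (c < n)%nat -> forall t, 0 < t -> derivable_pt_lim (fun s => X s c) t (DX t c).

Definition rcont_at0 (n : nat) (X : R -> vec) : Prop :=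
  forall c, (c < n)%nat -> forall eps, 0 < eps ->
    exists delta, 0 < delta /\ forall s, 0 <= s < delta -> Rabs (X s c - X 0 c) < eps.

Lemma finite_min_delta (P : nat -> R -> Prop) n :
  (forall c, (c < n)%nat -> exists delta, 0 < delta /\ forall s, 0 <= s < delta -> P c s) ->
  exists delta, 0 < delta /\ forall s, 0 <= s < delta -> forall c, (c < n)%nat -> P c s.
Proof.
  induction n as [|n IH]; intros H.
  - exists 1. split; [lra|]. intros; lia.
  - destruct (IH (fun c Hc => H c ltac:(lia))) as [d1 [Hd1 H1]].
    destruct (H n ltac:(lia)) as [d2 [Hd2 H2]].
    exists (Rmin d1 d2). split; [apply Rmin_pos; assumption|].
    intros s Hs c Hc. pose proof (Rmin_l d1 d2); pose proof (Rmin_r d1 d2).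
    destruct (Nat.eq_dec c n) as [->|Hne]; [apply H2; lra|apply H1; [lra|lia]].
Qed.

Lemma rcont_at0_vdist n X : rcont_at0 n X -> forall eps, 0 < eps ->
  exists delta, 0 < delta /\ forall s, 0 <= s < delta -> vdist n (X s) (X 0) <= eps.
Proof.
  intros HX eps Heps.
  set (eta := eps / (sqrt (INR n) + 1)).
  assert (Hsn := sqrt_pos (INR n)).
  assert (Heta : 0 < eta) by (apply Rdiv_lt_0_compat; lra).
  destruct (finite_min_delta (fun c s => Rabs (X s c - X 0 c) < eta) n
              (fun c Hc => HX c Hc eta Heta)) as [d [Hd Hclose]].
  exists d. split; [exact Hd|]. intros s Hs.
  eapply Rle_trans; [apply (enorm_le_bound n (fun c => X s c - X 0 c) eta); [lra|]|].
  - intros c Hc. left. apply Hclose; assumption.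
  - unfold eta. apply (Rmult_le_reg_r (sqrt (INR n) + 1)); [lra|].
    field_simplify; [nra|lra].
Qed.

Lemma derivable_pt_lim_sumR (g g' : nat -> R -> R) t k :
  (forall c, (c < k)%nat -> derivable_pt_lim (g c) t (g' c t)) ->
  derivable_pt_lim (fun s => sumR k (fun c => g c s)) t (sumR k (fun c => g' c t)).
Proof.
  induction k as [|k IH]; intros H; cbn [sumR].
  - apply derivable_pt_lim_const.
  - apply (derivable_pt_lim_plus (fun s => sumR k (fun c => g c s)) (g k));
      [apply IH; intros; apply H|apply H]; lia.
Qed.

(** Mean value theorem applied to [s |-> <X t - X a, X s>]. *)
Lemma vdist_le_speed_from n X DX M a t :
  has_derivs n X DX -> (forall s, 0 < s -> enorm n (DX s) <= M) -> 0 < a < t ->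
  vdist n (X t) (X a) <= M * (t - a).
Proof.
  intros HD HB Hat.
  set (u := fun c => X t c - X a c).
  destruct (MVT_cor2 (fun s => sumR n (fun c => u c * X s c))
              (fun s => sumR n (fun c => u c * DX s c)) a t ltac:(lra)) as [xi [Hmvt Hxi]].
  { intros s Hs. apply (derivable_pt_lim_sumR (fun c s => u c * X s c) (fun c s => u c * DX s c)).
    intros c Hc. apply (derivable_pt_lim_scal (fun s => X s c)). apply HD; [exact Hc|lra]. }
  assert (Hsq : vdist n (X t) (X a) ^ 2 = sumR n (fun c => u c * DX xi c) * (t - a)).
  { rewrite <- Hmvt, <- sumR_minus. change (vdist n (X t) (X a)) with (enorm n u).
    rewrite enorm_sq. apply sumR_ext. intros; unfold u; ring. }
  pose proof (sumR_mul_le n u (DX xi)) as HCS. change (enorm n u) with (vdist n (X t) (X a)) in HCS.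
  pose proof (HB xi ltac:(lra)). pose proof (vdist_nonneg n (X t) (X a)).
  pose proof (enorm_nonneg n (DX xi)).
  assert (vdist n (X t) (X a) ^ 2 <= vdist n (X t) (X a) * (M * (t - a))).
  { rewrite Hsq. apply Rle_trans with (vdist n (X t) (X a) * enorm n (DX xi) * (t - a)).
    - apply Rmult_le_compat_r; lra.
    - rewrite Rmult_assoc. apply Rmult_le_compat_l; [assumption|]. apply Rmult_le_compat_r; lra. }
  assert (0 <= M * (t - a)) by (apply Rmult_le_pos; lra).
  destruct (Rle_or_lt (vdist n (X t) (X a)) (M * (t - a))) as [Hle|Hgt]; [exact Hle|nra].
Qed.

Lemma vdist_le_speed n X DX M :
  has_derivs n X DX -> (forall s, 0 < s -> enorm n (DX s) <= M) -> rcont_at0 n X ->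
  forall t, 0 <= t -> vdist n (X t) (X 0) <= M * t.
Proof.
  intros HD HB HX t Ht.
  destruct (Req_dec t 0) as [->|Ht0].
  { rewrite vdist_eq_0 by reflexivity. lra. }
  assert (HM : 0 <= M) by (pose proof (HB t ltac:(lra)); pose proof (enorm_nonneg n (DX t)); lra).
  apply Rle_plus_epsilon. intros eps Heps.
  destruct (rcont_at0_vdist n X HX eps Heps) as [d [Hd Hclose]].
  set (a := Rmin (d / 2) (t / 2)).
  assert (0 < a) by (apply Rmin_pos; lra).
  assert (a <= d / 2) by apply Rmin_l. assert (a <= t / 2) by apply Rmin_r.
  pose proof (vdist_le_speed_from n X DX M a t HD HB ltac:(lra)).
  pose proof (Hclose a ltac:(lra)).
  pose proof (vdist_triangle n (X t) (X a) (X 0)).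
  nra.
Qed.

Lemma deriv_le_linear_nonpos (D D' : R -> R) L a t : a < t ->
  (forall s, a <= s <= t -> derivable_pt_lim D s (D' s)) ->
  (forall s, a < s < t -> D' s <= L * D s) -> D a <= 0 -> D t <= 0.
Proof.
  intros Hat HD HB Ha.
  destruct (MVT_cor2 (fun s => D s * exp (- L * s))
              (fun s => (D' s - L * D s) * exp (- L * s)) a t Hat) as [xi [Hmvt Hxi]].
  { intros s Hs.
    replace ((D' s - L * D s) * exp (- L * s))
      with (D' s * exp (- L * s) + D s * (- L * exp (- L * s))) by ring.
    apply (derivable_pt_lim_mult D (fun s => exp (- L * s))); [exact (HD s Hs)|].
    apply is_derive_Reals. auto_derive; [exact I|ring]. }
  pose proof (HB xi Hxi). pose proof (exp_pos (- L * xi)).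
  pose proof (exp_pos (- L * a)). pose proof (exp_pos (- L * t)).
  assert ((D' xi - L * D xi) * exp (- L * xi) * (t - a) <= 0)
    by (apply Rmult_le_0_r; [apply Rmult_le_0_r|]; lra).
  assert (D a * exp (- L * a) <= 0) by (apply Rmult_le_0_r; lra).
  nra.
Qed.

Definition phi (L t : R) : R := exp (L * t) - 1 - L * t.

Lemma phi_nonneg L t : 0 <= phi L t.
Proof. unfold phi. pose proof (exp_ineq1_le (L * t)). lra. Qed.

Lemma phi_0 L : phi L 0 = 0.
Proof. unfold phi. rewrite Rmult_0_r, exp_0. ring. Qed.

(** [phi L] is convex with [phi L 0 = 0], so [phi L s / s] increases strictly. *)
Lemma phi_ratio_lt L s T : 0 < L -> 0 < s < T -> phi L s * T < s * phi L T.
Proof.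
  intros HL Hs. unfold phi.
  set (z := exp (L * s)).
  assert (E1 : exp (L * T) = z * exp (L * (T - s)))
    by (unfold z; rewrite <- exp_plus; f_equal; ring).
  assert (E2 : 1 = z * exp (- (L * s)))
    by (unfold z; rewrite <- exp_plus, Rplus_opp_r, exp_0; reflexivity).
  assert (1 + L * (T - s) < exp (L * (T - s))) by (apply exp_ineq1; nra).
  pose proof (exp_ineq1_le (- (L * s))).
  assert (0 < z) by apply exp_pos.
  assert (z * (1 + L * (T - s)) < exp (L * T)) by (rewrite E1; apply Rmult_lt_compat_l; lra).
  assert (z * (1 - L * s) <= 1) by (rewrite E2 at 2; apply Rmult_le_compat_l; lra).
  nra.
Qed.

Lemma phi_le_ratio L s T : 0 < L -> 0 <= s <= T -> phi L s * T <= s * phi L T.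
Proof.
  intros HL Hs.
  destruct (Req_dec s 0) as [->|Hs0]; [rewrite phi_0; lra|].
  destruct (Req_dec s T) as [->|HsT]; [lra|].
  left. apply phi_ratio_lt; lra.
Qed.

(** Smoothed Euclidean norm: differentiable even where [z] vanishes. *)
Definition snorm (n : nat) (eta : R) (z : vec) : R := sqrt (sumR n (fun c => z c ^ 2) + eta ^ 2).

Lemma snorm_pos n eta z : 0 < eta -> 0 < snorm n eta z.
Proof. intros Heta. apply sqrt_lt_R0. pose proof (sumR_sq_nonneg n z). nra. Qed.

Lemma enorm_le_snorm n eta z : enorm n z <= snorm n eta z.
Proof. apply sqrt_le_1_alt. pose proof (pow2_ge_0 eta). lra. Qed.

Lemma snorm_le n eta z : 0 <= eta -> snorm n eta z <= enorm n z + eta.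
Proof.
  intros Heta. pose proof (enorm_nonneg n z).
  apply Rsqr_incr_0_var; [|lra]. unfold snorm.
  rewrite !Rsqr_pow2, pow2_sqrt, <- enorm_sq by (pose proof (sumR_sq_nonneg n z); nra).
  nra.
Qed.

Lemma derivable_pt_lim_snorm n eta (Z : R -> vec) (DZ : vec) s : 0 < eta ->
  (forall c, (c < n)%nat -> derivable_pt_lim (fun u => Z u c) s (DZ c)) ->
  derivable_pt_lim (fun u => snorm n eta (Z u)) s
    (sumR n (fun c => Z s c * DZ c) / snorm n eta (Z s)).
Proof.
  intros Heta HD. pose proof (snorm_pos n eta (Z s) Heta) as Hpos.
  replace (sumR n (fun c => Z s c * DZ c) / snorm n eta (Z s)) with
    (/ (2 * snorm n eta (Z s)) * sumR n (fun c => 2 * Z s c * DZ c)).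
  2:{ rewrite (sumR_ext _ _ (fun c => 2 * (Z s c * DZ c))), sumR_scal by (intros; ring).
      field. lra. }
  apply (derivable_pt_lim_comp (fun u => sumR n (fun c => Z u c ^ 2) + eta ^ 2) sqrt).
  - rewrite <- (Rplus_0_r (sumR _ _)).
    apply derivable_pt_lim_plus; [|apply derivable_pt_lim_const].
    apply (derivable_pt_lim_sumR (fun c u => Z u c ^ 2) (fun c u => 2 * Z u c * DZ c)).
    intros c Hc. replace (2 * Z s c * DZ c) with (INR 2 * (Z s c) ^ (2 - 1) * DZ c)
      by (simpl; ring).
    apply (derivable_pt_lim_comp (fun u => Z u c) (fun x => x ^ 2)); [exact (HD c Hc)|].
    apply derivable_pt_lim_pow.
  - apply derivable_pt_lim_sqrt. pose proof (sumR_sq_nonneg n (Z s)). nra.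
Qed.

Lemma snorm_deriv_le n eta z dz : 0 < eta ->
  sumR n (fun c => z c * dz c) / snorm n eta z <= enorm n dz.
Proof.
  intros Heta. pose proof (snorm_pos n eta z Heta).
  apply (Rmult_le_reg_r (snorm n eta z)); [assumption|].
  unfold Rdiv. rewrite Rmult_assoc, Rinv_l, Rmult_1_r by lra.
  eapply Rle_trans; [apply sumR_mul_le|]. rewrite Rmult_comm.
  apply Rmult_le_compat_l; [apply enorm_nonneg|apply enorm_le_snorm].
Qed.

(** Compare the smoothed norm of [Z] with the solution [G] of [G' = L G + K s] started above it. *)
Lemma enorm_growth_from n (Z DZ : R -> vec) L K a t eta :
  0 < L -> 0 <= K -> 0 < eta -> has_derivs n Z DZ -> 0 < a < t ->
  (forall s, a < s < t -> enorm n (DZ s) <= L * enorm n (Z s) + K * s) ->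
  enorm n (Z t) <= exp (L * (t - a)) * (enorm n (Z a) + eta) + K * phi L t / L ^ 2.
Proof.
  intros HL HK Heta HD Hat HB.
  set (c0 := enorm n (Z a) + eta).
  set (G := fun s => exp (L * (s - a)) * c0 + K * phi L s / L ^ 2).
  set (G' := fun s => L * G s + K * s).
  assert (HG : forall s, derivable_pt_lim G s (G' s)).
  { intros s. unfold G', G, phi. apply is_derive_Reals.
    auto_derive; [exact I|unfold Rminus; field; lra]. }
  assert (Hphi : forall s, 0 <= K * phi L s / L ^ 2)
    by (intros s; apply Rmult_le_pos; [apply Rmult_le_pos; [exact HK|apply phi_nonneg]|];
        apply Rlt_le, Rinv_0_lt_compat, pow_lt; exact HL).
  enough (snorm n eta (Z t) - G t <= 0)
    by (pose proof (enorm_le_snorm n eta (Z t)); unfold G, c0 in *; lra).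
  apply (deriv_le_linear_nonpos (fun s => snorm n eta (Z s) - G s)
           (fun s => sumR n (fun c => Z s c * DZ s c) / snorm n eta (Z s) - G' s) L a t); try lra.
  - intros s Hs. apply derivable_pt_lim_minus; [|apply HG].
    apply derivable_pt_lim_snorm; [exact Heta|]. intros c Hc. apply HD; [exact Hc|lra].
  - intros s Hs. pose proof (snorm_deriv_le n eta (Z s) (DZ s) Heta).
    pose proof (HB s Hs). pose proof (enorm_le_snorm n eta (Z s)).
    unfold G'. nra.
  - pose proof (snorm_le n eta (Z a) ltac:(lra)). pose proof (Hphi a).
    unfold G. replace (L * (a - a)) with 0 by ring. rewrite exp_0. unfold c0 in *. lra.
Qed.

Lemma enorm_gronwall n (Z DZ : R -> vec) L K :
  0 < L -> 0 <= K -> has_derivs n Z DZ -> rcont_at0 n Z -> (forall c, (c < n)%nat -> Z 0 c = 0) ->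
  forall t, 0 <= t -> (forall s, 0 < s < t -> enorm n (DZ s) <= L * enorm n (Z s) + K * s) ->
  enorm n (Z t) <= K * phi L t / L ^ 2.
Proof.
  intros HL HK HD HZ HZ0 t Ht HB.
  destruct (Req_dec t 0) as [->|Ht0].
  { rewrite enorm_zero, phi_0 by exact HZ0. lra. }
  apply Rle_plus_epsilon. intros eps Heps.
  set (eta := eps / (2 * exp (L * t))).
  assert (Heta : 0 < eta) by (apply Rdiv_lt_0_compat; [lra|pose proof (exp_pos (L * t)); lra]).
  destruct (rcont_at0_vdist n Z HZ eta Heta) as [d [Hd Hclose]].
  set (a := Rmin (d / 2) (t / 2)).
  assert (0 < a) by (apply Rmin_pos; lra).
  assert (a <= d / 2) by apply Rmin_l. assert (a <= t / 2) by apply Rmin_r.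
  pose proof (enorm_growth_from n Z DZ L K a t eta HL HK Heta HD ltac:(lra)
                (fun s Hs => HB s ltac:(lra))) as Hgrowth.
  assert (Hza : enorm n (Z a) <= eta)
    by (rewrite <- (vdist_zero_r n (Z a) (Z 0) HZ0); apply Hclose; lra).
  assert (Hexp : exp (L * (t - a)) <= exp (L * t)) by (apply Rlt_le, exp_increasing; nra).
  assert (Hbound : exp (L * t) * (2 * eta) = eps)
    by (unfold eta; field; pose proof (exp_pos (L * t)); lra).
  pose proof (enorm_nonneg n (Z a)). pose proof (exp_pos (L * (t - a))).
  nra.
Qed.

(** * Reference trajectories *)

Lemma drift_vdist_le N n nbr f M L1 L2 k x y xs ys :
  drift_ok N n nbr f M L1 L2 -> (k < N)%nat ->
  length xs = length (nbr k) -> length ys = length (nbr k) ->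
  vdist n (f k x xs) (f k y ys) <= L2 * vdist n x y + L1 * sdist n xs ys.
Proof.
  intros HD Hk Hxs Hys. destruct (HD k Hk) as [_ [HL1 HL2]].
  pose proof (vdist_triangle n (f k x xs) (f k y xs) (f k y ys)).
  pose proof (HL2 x y xs Hxs). pose proof (HL1 y xs ys Hxs Hys). lra.
Qed.

Lemma ref_traj_drift N n nbr f M L1 L2 I xG m i li chi :
  graph_ok N nbr -> 0 <= M -> drift_ok N n nbr f M L1 L2 -> (1 <= m)%nat -> (i < N)%nat ->
  ref_traj n nbr f I xG m i li chi ->
  forall nu s, ball_layer nbr i m nu -> 0 <= s -> vdist n (chi nu s) (xG (li nu)) <= M * s.
Proof.
  intros HG HM HD Hm Hi Hr nu s Hnu Hs.
  destruct (ref_traj_cases n nbr f I xG m i li chi Hm Hr nu Hnu)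
    as [[[Hode Hcont] [Hinit _]]|Hfrozen].
  - rewrite <- (vdist_ext_r n _ _ _ Hinit).
    apply (vdist_le_speed n (chi nu)
             (fun s => f nu (chi nu s) (map (fun mu => chi mu s) (nbr nu))));
      [exact Hode| |exact Hcont|exact Hs].
    intros u Hu. rewrite <- vnorm_enorm.
    apply (HD nu (ball_layer_lt _ _ _ _ _ HG Hi Hnu)). apply length_map.
  - rewrite vdist_eq_0 by (intros c Hc; apply Hfrozen; assumption). nra.
Qed.

Lemma rcont_at0_sub n X Y :
  rcont_at0 n X -> rcont_at0 n Y -> rcont_at0 n (fun s c => X s c - Y s c).
Proof.
  intros HX HY c Hc eps Heps.
  destruct (HX c Hc (eps / 2) ltac:(lra)) as [d1 [Hd1 H1]].
  destruct (HY c Hc (eps / 2) ltac:(lra)) as [d2 [Hd2 H2]].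
  exists (Rmin d1 d2). split; [apply Rmin_pos; assumption|].
  intros s Hs. pose proof (Rmin_l d1 d2); pose proof (Rmin_r d1 d2).
  specialize (H1 s ltac:(lra)); specialize (H2 s ltac:(lra)).
  replace (X s c - Y s c - (X 0 c - Y 0 c)) with ((X s c - X 0 c) - (Y s c - Y 0 c)) by ring.
  eapply Rle_lt_trans; [apply Rabs_triang|]. rewrite Rabs_Ropp. lra.
Qed.

Lemma contraction_bootstrap (P : R -> Prop) rho lam0 :
  0 <= rho < 1 -> 1 <= lam0 -> P lam0 ->
  (forall lam, 1 <= lam -> P lam -> P (Rmax 1 (lam * rho))) -> P 1.
Proof.
  intros Hrho Hlam0 H0 Hstep.
  assert (Hiter : forall k, P (Rmax 1 (lam0 * rho ^ k))).
  { induction k as [|k IH]; simpl.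
    - rewrite Rmult_1_r, Rmax_right by lra. exact H0.
    - replace (Rmax 1 (lam0 * (rho * rho ^ k))) with (Rmax 1 (Rmax 1 (lam0 * rho ^ k) * rho)).
      + apply Hstep; [apply Rmax_l|exact IH].
      + pose proof (pow_le rho k (proj1 Hrho)).
        destruct (Rle_dec 1 (lam0 * rho ^ k)) as [Hge|Hlt].
        * rewrite (Rmax_right _ _ Hge). f_equal. ring.
        * apply Rnot_le_lt in Hlt.
          assert (0 <= lam0 * rho ^ k) by (apply Rmult_le_pos; lra).
          assert (lam0 * (rho * rho ^ k) <= 1) by
            (replace (lam0 * (rho * rho ^ k)) with (rho * (lam0 * rho ^ k)) by ring; nra).
          rewrite (Rmax_left 1 (lam0 * rho ^ k)), (Rmax_left 1 (1 * rho)), Rmax_left by lra.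
          reflexivity. }
  destruct (pow_lt_1_zero rho ltac:(rewrite Rabs_pos_eq; lra) (/ lam0)
              ltac:(apply Rinv_0_lt_compat; lra)) as [K HK].
  specialize (HK K (le_n K)). rewrite Rabs_pos_eq in HK by (apply pow_le; lra).
  assert (Hone : Rmax 1 (lam0 * rho ^ K) = 1).
  { apply Rmax_left. replace 1 with (lam0 * / lam0) by (field; lra).
    apply Rmult_le_compat_l; lra. }
  rewrite <- Hone. apply Hiter.
Qed.

Section Gap.

Variables (N n : nat) (nbr : nat -> list nat) (f : nat -> vec -> list vec -> vec)
  (M L1 L2 : R) (I : Type) (xG : I -> vec) (m i l : nat) (li ll : nat -> I)
  (chi_i chi_l : nat -> R -> vec) (tstar : R).

Hypotheses (HG : graph_ok N nbr) (HM : 0 < M) (HL1 : 0 < L1) (HL2 : 0 < L2)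
  (HD : drift_ok N n nbr f M L1 L2) (Hm : (1 <= m)%nat)
  (Hi : (i < N)%nat) (Hl : In l (nbr i)) (Hcons : consistent I nbr m i l li ll)
  (Hri : ref_traj n nbr f I xG m i li chi_i) (Hrl : ref_traj n nbr f I xG m l ll chi_l)
  (Htstar : 0 < tstar)
  (Heq : exp (L2 * tstar) - (L2 + L2 ^ 2 / (L1 * sqrt (INR (Nmax N nbr)))) * tstar - 1 = 0).

Let common nu := ball_layer nbr i m nu /\ ball_layer nbr l m nu.
Let gap nu s := vdist n (chi_i nu s) (chi_l nu s).
Let sN := sqrt (INR (Nmax N nbr)).
Let rho T := L1 * sN * phi L2 T / (L2 ^ 2 * T).
Let drift_i nu u := f nu (chi_i nu u) (map (fun mu => chi_i mu u) (nbr nu)).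
Let drift_l nu u := f nu (chi_l nu u) (map (fun mu => chi_l mu u) (nbr nu)).

Lemma sN_pos : 0 < sN.
Proof.
  apply sqrt_lt_R0, lt_0_INR. pose proof (length_nbr_le_Nmax N nbr i Hi).
  destruct (nbr i) as [|j js]; [destruct Hl|simpl in *; lia].
Qed.

Lemma common_lt nu : common nu -> (nu < N)%nat.
Proof. intros [Hnu _]. exact (ball_layer_lt _ _ _ _ _ HG Hi Hnu). Qed.

Lemma gap_le_refs nu s : common nu ->
  gap nu s <= vdist n (chi_i nu s) (xG (li nu)) + vdist n (chi_l nu s) (xG (ll nu)).
Proof.
  intros [H1 H2]. unfold gap. rewrite (Hcons nu H1 H2), (vdist_sym n (chi_l nu s)).
  apply vdist_triangle.
Qed.

Lemma drift_i_le nu s : common nu -> 0 <= s -> vdist n (chi_i nu s) (xG (li nu)) <= M * s.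
Proof.
  intros [H1 _] Hs. exact (ref_traj_drift N n nbr f M L1 L2 I xG m i li chi_i
    HG ltac:(lra) HD Hm Hi Hri nu s H1 Hs).
Qed.

Lemma drift_l_le nu s : common nu -> 0 <= s -> vdist n (chi_l nu s) (xG (ll nu)) <= M * s.
Proof.
  intros [_ H2] Hs. exact (ref_traj_drift N n nbr f M L1 L2 I xG m l ll chi_l
    HG ltac:(lra) HD Hm (proj2 (proj2 (HG i Hi)) l Hl) Hrl nu s H2 Hs).
Qed.

Lemma gap_le_2M nu s : common nu -> 0 <= s -> gap nu s <= 2 * M * s.
Proof.
  intros Hc Hs. pose proof (gap_le_refs nu s Hc).
  pose proof (drift_i_le nu s Hc Hs). pose proof (drift_l_le nu s Hc Hs). lra.
Qed.

Lemma gap_le_M_of_frozen nu s : common nu -> 0 <= s ->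
  (forall c, (c < n)%nat -> chi_i nu s c = xG (li nu) c) \/
  (forall c, (c < n)%nat -> chi_l nu s c = xG (ll nu) c) ->
  gap nu s <= M * s.
Proof.
  intros Hc Hs Hfrozen. pose proof (gap_le_refs nu s Hc).
  pose proof (drift_i_le nu s Hc Hs). pose proof (drift_l_le nu s Hc Hs).
  destruct Hfrozen as [Hfr|Hfr]; rewrite (vdist_eq_0 n _ _ Hfr) in *; lra.
Qed.

Lemma drift_gap_le nu u b :
  (nu < N)%nat -> 0 <= b -> (forall mu, In mu (nbr nu) -> gap mu u <= b) ->
  vdist n (drift_i nu u) (drift_l nu u) <= L2 * gap nu u + L1 * sN * b.
Proof.
  intros Hnu Hb Hnbr.
  eapply Rle_trans;
    [apply (drift_vdist_le N n nbr f M L1 L2); [exact HD|exact Hnu|apply length_map..]|].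
  apply Rplus_le_compat_l. rewrite Rmult_assoc. apply Rmult_le_compat_l; [lra|].
  eapply Rle_trans;
    [apply (sdist_map_le n (fun mu => chi_i mu u) (fun mu => chi_l mu u)); eassumption|].
  apply Rmult_le_compat_r; [exact Hb|].
  apply sqrt_le_1_alt, le_INR, length_nbr_le_Nmax, Hnu.
Qed.

(** When both trajectories of [nu] move, their gap obeys a linear differential inequality
    forced by the gaps of the neighbours; Gronwall integrates it. *)
Lemma gap_moving lam T nu s : 0 <= lam ->
  (forall mu, common mu -> forall u, 0 <= u < T -> gap mu u <= lam * M * u) ->
  common nu -> solves_ode n nbr f chi_i nu -> solves_ode n nbr f chi_l nu ->
  (forall c, (c < n)%nat -> chi_i nu 0 c = chi_l nu 0 c) ->
  (forall mu, In mu (nbr nu) -> common mu) -> 0 <= s <= T ->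
  gap nu s <= L1 * sN * lam * M * phi L2 s / L2 ^ 2.
Proof.
  intros Hlam Hprev Hc [Hdi Hci] [Hdl Hcl] Hinit Hnbr Hs.
  pose proof sN_pos.
  apply (enorm_gronwall n (fun u c => chi_i nu u c - chi_l nu u c)
           (fun u c => drift_i nu u c - drift_l nu u c) L2 (L1 * sN * lam * M)); try lra.
  - repeat apply Rmult_le_pos; lra.
  - intros c Hcn u Hu. apply derivable_pt_lim_minus; [apply Hdi|apply Hdl]; assumption.
  - exact (rcont_at0_sub n (chi_i nu) (chi_l nu) Hci Hcl).
  - intros c Hcn. rewrite Hinit by exact Hcn. ring.
  - intros u Hu.
    change (vdist n (drift_i nu u) (drift_l nu u) <= L2 * gap nu u + L1 * sN * lam * M * u).
    replace (L1 * sN * lam * M * u) with (L1 * sN * (lam * M * u)) by ring.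
    apply drift_gap_le; [exact (common_lt nu Hc)|apply Rmult_le_pos; [apply Rmult_le_pos|]; lra|].
    intros mu Hmu. apply Hprev; [exact (Hnbr mu Hmu)|lra].
Qed.

Lemma gap_step lam T : 0 <= lam ->
  (forall mu, common mu -> forall u, 0 <= u < T -> gap mu u <= lam * M * u) ->
  forall nu, common nu -> forall s, 0 <= s <= T ->
  gap nu s <= Rmax (M * s) (L1 * sN * lam * M * phi L2 s / L2 ^ 2).
Proof.
  intros Hlam Hprev nu Hc s Hs. destruct Hc as [H1 H2].
  destruct (ref_traj_cases n nbr f I xG m i li chi_i Hm Hri nu H1) as [[Hodei [Hinii Hnbi]]|Hfri].
  - destruct (ref_traj_cases n nbr f I xG m l ll chi_l Hm Hrl nu H2) as [[Hodel [Hinil Hnbl]]|Hfrl].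
    + eapply Rle_trans; [|apply Rmax_r].
      apply (gap_moving lam T); try assumption.
      * split; assumption.
      * intros c Hcn. rewrite Hinii, Hinil, (Hcons nu H1 H2) by exact Hcn. reflexivity.
      * intros mu Hmu. split; [apply Hnbi|apply Hnbl]; exact Hmu.
    + eapply Rle_trans; [|apply Rmax_l].
      apply gap_le_M_of_frozen; [split; assumption|lra|right; apply Hfrl; lra].
  - eapply Rle_trans; [|apply Rmax_l].
    apply gap_le_M_of_frozen; [split; assumption|lra|left; apply Hfri; lra].
Qed.

Lemma rho_nonneg T : 0 < T -> 0 <= rho T.
Proof.
  intros HT. pose proof sN_pos. unfold rho, Rdiv.
  apply Rmult_le_pos; [apply Rmult_le_pos; [nra|apply phi_nonneg]|].
  apply Rlt_le, Rinv_0_lt_compat, Rmult_lt_0_compat; [apply pow_lt|]; lra.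
Qed.

Lemma gap_contract lam T : 0 <= lam -> 0 < T ->
  (forall mu, common mu -> forall u, 0 <= u < T -> gap mu u <= lam * M * u) ->
  forall nu, common nu -> forall s, 0 <= s <= T -> gap nu s <= Rmax 1 (lam * rho T) * (M * s).
Proof.
  intros Hlam HT Hprev nu Hc s Hs. pose proof sN_pos.
  eapply Rle_trans; [apply (gap_step lam T); assumption|].
  apply Rmax_lub.
  - rewrite <- (Rmult_1_l (M * s)) at 1. apply Rmult_le_compat_r; [nra|apply Rmax_l].
  - apply Rle_trans with (lam * rho T * (M * s));
      [|apply Rmult_le_compat_r; [nra|apply Rmax_r]].
    set (C := L1 * sN * lam * M / (L2 ^ 2 * T)).
    assert (HC : 0 <= C).
    { unfold C, Rdiv. apply Rmult_le_pos; [repeat apply Rmult_le_pos; lra|].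
      apply Rlt_le, Rinv_0_lt_compat, Rmult_lt_0_compat; [apply pow_lt|]; lra. }
    replace (L1 * sN * lam * M * phi L2 s / L2 ^ 2) with (C * (phi L2 s * T))
      by (unfold C; field; lra).
    replace (lam * rho T * (M * s)) with (C * (s * phi L2 T)) by (unfold C, rho; field; lra).
    apply Rmult_le_compat_l; [exact HC|apply phi_le_ratio; lra].
Qed.

Lemma rho_tstar : rho tstar = 1.
Proof.
  pose proof sN_pos.
  assert (Hphi : phi L2 tstar = L2 ^ 2 / (L1 * sN) * tstar) by (unfold phi, sN; lra).
  unfold rho. rewrite Hphi. field. repeat split; lra.
Qed.

Lemma rho_lt_1 T : 0 < T < tstar -> rho T < 1.
Proof.
  intros HT. rewrite <- rho_tstar. pose proof sN_pos.
  set (C := L1 * sN / (L2 ^ 2 * T * tstar)).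
  assert (HC : 0 < C).
  { unfold C. apply Rdiv_lt_0_compat; [nra|].
    apply Rmult_lt_0_compat; [apply Rmult_lt_0_compat; [apply pow_lt|]|]; lra. }
  unfold rho.
  replace (L1 * sN * phi L2 T / (L2 ^ 2 * T)) with (C * (phi L2 T * tstar))
    by (unfold C; field; lra).
  replace (L1 * sN * phi L2 tstar / (L2 ^ 2 * tstar)) with (C * (T * phi L2 tstar))
    by (unfold C; field; lra).
  apply Rmult_lt_compat_l; [exact HC|apply phi_ratio_lt; lra].
Qed.

Lemma gap_le_speed_before T : 0 < T < tstar ->
  forall nu, common nu -> forall s, 0 <= s <= T -> gap nu s <= M * s.
Proof.
  intros HT.
  set (P := fun lam => forall nu, common nu -> forall s, 0 <= s <= T -> gap nu s <= lam * (M * s)).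
  enough (H1 : P 1) by (intros nu Hc s Hs; rewrite <- (Rmult_1_l (M * s)); apply H1; assumption).
  apply (contraction_bootstrap P (rho T) 2).
  - split; [apply rho_nonneg|apply rho_lt_1]; lra.
  - lra.
  - intros nu Hc s Hs. rewrite <- Rmult_assoc. apply gap_le_2M; [exact Hc|lra].
  - intros lam Hlam HP nu Hc s Hs. apply (gap_contract lam T); [lra|lra| |exact Hc|exact Hs].
    intros mu Hmu u Hu. rewrite Rmult_assoc. apply HP; [exact Hmu|lra].
Qed.

Lemma gap_le_speed nu : ball_layer nbr i m nu -> ball_layer nbr l m nu ->
  forall s, 0 <= s <= tstar -> vdist n (chi_i nu s) (chi_l nu s) <= M * s.
Proof.
  intros H1 H2 s Hs.
  assert (Hbefore : forall mu, common mu -> forall u, 0 <= u < tstar -> gap mu u <= 1 * M * u).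
  { intros mu Hmu u Hu. destruct (Req_dec u 0) as [->|Hu0].
    - pose proof (gap_le_2M mu 0 Hmu ltac:(lra)). lra.
    - rewrite Rmult_1_l. apply (gap_le_speed_before u); [lra|exact Hmu|lra]. }
  pose proof (gap_contract 1 tstar ltac:(lra) Htstar Hbefore nu (conj H1 H2) s Hs) as Hgap.
  rewrite Rmult_1_l, rho_tstar, Rmax_left in Hgap by lra. unfold gap in Hgap. lra.
Qed.

End Gap.

Theorem lemma4 (N n : nat) (nbr : nat -> list nat) (f : nat -> vec -> list vec -> vec)
    (M L1 L2 : R) (I : Type) (Cells : I -> vec -> Prop) (xG : I -> vec) (m : nat)
    (i l : nat) (li ll : nat -> I) (chi_i chi_l : nat -> R -> vec) (tstar : R) :
  graph_ok N nbr ->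
  0 < M -> 0 < L1 -> 0 < L2 ->
  drift_ok N n nbr f M L1 L2 ->
  @cell_decomposition n I Cells xG ->
  (1 <= m)%nat ->
  (i < N)%nat -> In l (nbr i) ->
  @consistent I nbr m i l li ll ->
  @ref_traj n nbr f I xG m i li chi_i ->
  @ref_traj n nbr f I xG m l ll chi_l ->
  0 < tstar ->
  exp (L2 * tstar) - (L2 + L2 ^ 2 / (L1 * sqrt (INR (Nmax N nbr)))) * tstar - 1 = 0 ->
  forall k, ball_layer nbr l (m - 1) k ->
  forall t, 0 <= t <= tstar ->
    vdist n (chi_i k t) (chi_l k t) <= M * t.
Proof.
  intros HG HM HL1 HL2 HD _ Hm Hi Hl Hcons Hri Hrl Htstar Heq k Hk t Ht.
  assert (Hki : ball_layer nbr i m k).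
  { replace m with (S (m - 1)) by lia. exact (ball_layer_of_nbr _ _ _ _ _ Hl Hk). }
  assert (Hkl : ball_layer nbr l m k) by (apply (ball_layer_mono _ _ (m - 1)); [lia|exact Hk]).
  exact (gap_le_speed N n nbr f M L1 L2 I xG m i l li ll chi_i chi_l tstar
           HG HM HL1 HL2 HD Hm Hi Hl Hcons Hri Hrl Htstar Heq k Hki Hkl t Ht).
Qed.
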